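(* Let $G$ be a layered, structurally saturated sequent. Then the relation $\le$ on the layers of $G$ is a (partial) order relation, i.e. reflexive, transitive and antisymmetric.
   Context: A sequent $G$ is $\mathcal{R},\Gamma\Rightarrow\Delta$ where $\mathcal{R}$ is a set of relational atoms $xRy$ or $x\le y$ between labels and $\Gamma,\Delta$ are multisets of labelled formulas $x{:}A$. Write $x\le_G y$, $xR_Gy$ if the corresponding atom is in $\mathcal{R}$; $x{:}C^\bullet$ means $x{:}C\in\Gamma$. $G$ is structurally saturated if: $x\le_G y$ and $x{:}C^\bullet$ imply $y{:}C^\bullet$; $xR_Gy$ and $y\le_G z$ imply some $u$ with $x\le_G u$ and $uR_Gz$; $xR_Gy$ and $x\le_G z$ imply some $u$ with $y\le_G u$ and $zR_Gu$; $\le_G$ and $R_G$ are both transitive and reflexive on all labels of $G$. A layer of $G$ is an equivalence class of the reflexive-transitive closure $\sim_G$ of $R_G\cup R_G^{-1}$. $G$ is layered if for all labels $x,x',y,y'$: (1) if $x\sim_G y$... precisely: if $x \mathrel{(R_G\cup R_G^{-1})^*} y$ with $x\ne y$ then neither $x\le_G y$ nor $y\le_G x$; (2) if $x \mathrel{(R_G\cup R_G^{-1})^*} y$, $x' \mathrel{(R_G\cup R_G^{-1})^*} y'$, $x\le_G x'$ and $x\ne x'$, then not $y'\le_G y$. For layers $L_1,L_2$, $L_1\le L_2$ iff there are $x\in L_1$, $y\in L_2$ with $x\le_G y$. *)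

From Stdlib Require Import List Relations.
Import ListNotations.

Definition label := nat.

(* Formulas of (intuitionistic) modal logic; the statement does not depend
   on the connectives, only on labelled formulas x:A occurring in Gamma. *)
Inductive form : Type :=
| Var  : nat -> form
| Bot  : form
| And  : form -> form -> form
| Or   : form -> form -> form
| Imp  : form -> form -> form
| Box  : form -> form
| Dia  : form -> form.

Inductive ratom : Type :=
| RelR  : label -> label -> ratom
| RelLe : label -> label -> ratom.

Definition lform := (label * form)%type.

(* A sequent  R, Gamma => Delta  (multisets represented by lists). *)
Record sequent : Type := Sequent {
  rels  : list ratom;
  gamma : list lform;
  delta : list lform }.

Definition leG (G : sequent) (x y : label) : Prop := In (RelLe x y) (rels G).
Definition RG  (G : sequent) (x y : label) : Prop := In (RelR x y) (rels G).
Definition inGamma (G : sequent) (x : label) (C : form) : Prop := In (x, C) (gamma G).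

Definition ratom_labels (a : ratom) : list label :=
  match a with RelR x y => [x; y] | RelLe x y => [x; y] end.
Definition labels (G : sequent) : list label :=
  flat_map ratom_labels (rels G) ++ map fst (gamma G) ++ map fst (delta G).
Definition is_label (G : sequent) (x : label) : Prop := In x (labels G).

Definition simG (G : sequent) : relation label :=
  clos_refl_trans label (fun x y => RG G x y \/ RG G y x).

Definition structurally_saturated (G : sequent) : Prop :=
  (forall x y C, leG G x y -> inGamma G x C -> inGamma G y C) /\
  (forall x y z, RG G x y -> leG G y z -> exists u, leG G x u /\ RG G u z) /\
  (forall x y z, RG G x y -> leG G x z -> exists u, leG G y u /\ RG G z u) /\
  (forall x y z, leG G x y -> leG G y z -> leG G x z) /\
  (forall x y z, RG G x y -> RG G y z -> RG G x z) /\
  (forall x, is_label G x -> leG G x x) /\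
  (forall x, is_label G x -> RG G x x).

Definition layered (G : sequent) : Prop :=
  (forall x y, simG G x y -> x <> y -> ~ leG G x y /\ ~ leG G y x) /\
  (forall x x' y y', simG G x y -> simG G x' y' -> leG G x x' -> x <> x' ->
     ~ leG G y' y).

Definition is_layer (G : sequent) (L : label -> Prop) : Prop :=
  exists x, is_label G x /\ forall y, L y <-> (is_label G y /\ simG G x y).

Definition layer_le (G : sequent) (L1 L2 : label -> Prop) : Prop :=
  exists x y, L1 x /\ L2 y /\ leG G x y.

(* The label order lifts along layers: by the two saturation conditions, an
   edge x <= y can be transported along any R-zigzag from x to z, yielding
   z <= u with u in the layer of y.  Hence a layer L2 <= L3 lies below L3 from
   every one of its points, which gives transitivity.  For antisymmetry, a
   cycle L1 <= L2 <= L1 produces x <= y <= u with x, u in one layer;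
   layeredness forces x = u and then x = y, so L1 and L2 meet and coincide. *)
From Stdlib Require Import List Relations RelationClasses Arith
  FunctionalExtensionality PropExtensionality.

Section Layers.

Variable G : sequent.

#[export] Instance simG_Equivalence : Equivalence (simG G).
Proof.
  split.
  - intro x; apply rt_refl.
  - intros x y Hxy; induction Hxy as [x y [Hxy | Hyx] | x | x y z _ IHxy _ IHyz].
    + apply rt_step; right; exact Hxy.
    + apply rt_step; left; exact Hyx.
    + apply rt_refl.
    + eapply rt_trans; eassumption.
  - intros x y z; apply rt_trans.
Qed.

Lemma leG_is_label_r x y : leG G x y -> is_label G y.
Proof.
  intro Hxy; apply in_or_app; left.
  apply in_flat_map; exists (RelLe x y); split; [exact Hxy | right; left; reflexivity].
Qed.

Lemma layer_of_mem L x : is_layer G L -> L x ->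
  forall y, L y <-> is_label G y /\ simG G x y.
Proof.
  intros [b [_ HL]] Hx y; apply HL in Hx as [_ Hbx].
  rewrite HL; split; intros [Hy Hs]; split; try exact Hy.
  - rewrite <- Hbx; exact Hs.
  - rewrite Hbx; exact Hs.
Qed.

Lemma layer_sim L x y : is_layer G L -> L x -> L y -> simG G x y.
Proof. intros HL Hx Hy; apply (layer_of_mem L x HL Hx) in Hy; apply Hy. Qed.

Lemma layer_eq L1 L2 x : is_layer G L1 -> is_layer G L2 -> L1 x -> L2 x -> L1 = L2.
Proof.
  intros HL1 HL2 Hx1 Hx2.
  apply functional_extensionality; intro y; apply propositional_extensionality.
  rewrite (layer_of_mem L1 x HL1 Hx1), (layer_of_mem L2 x HL2 Hx2); reflexivity.
Qed.

Section Saturated.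

Hypothesis le_R_back : forall x y z,
  RG G x y -> leG G y z -> exists u, leG G x u /\ RG G u z.
Hypothesis le_R_forth : forall x y z,
  RG G x y -> leG G x z -> exists u, leG G y u /\ RG G z u.

Lemma leG_sim_lift x z y : simG G x z -> leG G x y ->
  exists u, leG G z u /\ simG G y u.
Proof.
  intro Hxz; apply clos_rt_rt1n in Hxz; revert y.
  induction Hxz as [x | x w z Hxw _ IH]; intros y Hxy.
  - exists y; split; [exact Hxy | reflexivity].
  - assert (Hstep : exists v, leG G w v /\ simG G y v).
    { destruct Hxw as [Hxw | Hwx].
      - destruct (le_R_forth _ _ _ Hxw Hxy) as [v [Hwv Hyv]].
        exists v; split; [exact Hwv | apply rt_step; left; exact Hyv].
      - destruct (le_R_back _ _ _ Hwx Hxy) as [v [Hwv Hvy]].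
        exists v; split; [exact Hwv | apply rt_step; right; exact Hvy]. }
    destruct Hstep as [v [Hwv Hyv]].
    destruct (IH v Hwv) as [u [Hzu Hvu]].
    exists u; split; [exact Hzu | rewrite Hyv; exact Hvu].
Qed.

Lemma layer_le_lift L2 L3 y : is_layer G L2 -> is_layer G L3 ->
  layer_le G L2 L3 -> L2 y -> exists u, L3 u /\ leG G y u.
Proof.
  intros HL2 HL3 [x [z [Hx [Hz Hxz]]]] Hy.
  destruct (leG_sim_lift x y z (layer_sim L2 x y HL2 Hx Hy) Hxz) as [u [Hyu Hzu]].
  exists u; split; [| exact Hyu].
  apply (layer_of_mem L3 z HL3 Hz); split; [eapply leG_is_label_r; eassumption | exact Hzu].
Qed.

End Saturated.

Section Layered.

Hypothesis sim_not_leG : forall x y, simG G x y -> x <> y -> ~ leG G x y /\ ~ leG G y x.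
Hypothesis leG_not_back : forall x x' y y', simG G x y -> simG G x' y' ->
  leG G x x' -> x <> x' -> ~ leG G y' y.

Lemma sim_leG_eq x y : simG G x y -> leG G x y -> x = y.
Proof.
  intros Hs Hxy; destruct (Nat.eq_dec x y) as [Heq | Hne]; [exact Heq |].
  exfalso; exact (proj1 (sim_not_leG x y Hs Hne) Hxy).
Qed.

Lemma leG_antisym x y : leG G x y -> leG G y x -> x = y.
Proof.
  intros Hxy Hyx; destruct (Nat.eq_dec x y) as [Heq | Hne]; [exact Heq |].
  exfalso; exact (leG_not_back x y x y (rt_refl _ _ _) (rt_refl _ _ _) Hxy Hne Hyx).
Qed.

End Layered.

End Layers.

Theorem mainTheorem4 (G : sequent) :
  layered G -> structurally_saturated G ->
  (forall L, is_layer G L -> layer_le G L L) /\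
  (forall L1 L2 L3, is_layer G L1 -> is_layer G L2 -> is_layer G L3 ->
     layer_le G L1 L2 -> layer_le G L2 L3 -> layer_le G L1 L3) /\
  (forall L1 L2, is_layer G L1 -> is_layer G L2 ->
     layer_le G L1 L2 -> layer_le G L2 L1 -> L1 = L2).
Proof.
  intros [Hsim_le Hback] [_ [HRle [HleR [Hle_trans [_ [Hle_refl _]]]]]].
  split; [| split].
  - intros L [b [Hb HL]].
    assert (HLb : L b) by (apply HL; split; [exact Hb | reflexivity]).
    exists b, b; auto.
  - intros L1 L2 L3 _ HL2 HL3 [x [y [Hx [Hy Hxy]]]] H23.
    destruct (layer_le_lift G HRle HleR L2 L3 y HL2 HL3 H23 Hy) as [u [Hu Hyu]].
    exists x, u; eauto.
  - intros L1 L2 HL1 HL2 [x [y [Hx [Hy Hxy]]]] H21.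
    destruct (layer_le_lift G HRle HleR L2 L1 y HL2 HL1 H21 Hy) as [u [Hu Hyu]].
    assert (Hxu : x = u)
      by (apply (sim_leG_eq G Hsim_le); [apply (layer_sim G L1) | eapply Hle_trans]; eauto).
    subst u.
    assert (Hxy_eq : x = y) by exact (leG_antisym G Hback x y Hxy Hyu).
    subst y; exact (layer_eq G L1 L2 x HL1 HL2 Hx Hy).
Qed.
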